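(* Consider a source, a destination and $M \geq 1$ relays. Let $a_{sd}$ (source to destination), $a_{si}$ (source to relay $i$) and $a_{id}$ (relay $i$ to destination), $i=1,\dots,M$, be mutually independent circularly symmetric complex Gaussian $\mathcal{CN}(0,1)$ channel gains. Let the best relay $b$ be the index maximizing $\min\{|a_{si}|^2, |a_{id}|^2\}$ over $i \in \{1,\dots,M\}$, and write $a_{sb}, a_{bd}$ for its gains. Let $\rho > 0$ be the SNR, $r \in (0, 1/2)$ the multiplexing gain, and $R = r\log\rho$ the code rate. Under the (opportunistic) decode-and-forward protocol, an outage occurs as follows: if $\tfrac12\log(1+\rho|a_{sb}|^2) > R$ (the best relay decodes), outage is the event $\tfrac12\log\bigl(1+\rho(|a_{sd}|^2+|a_{bd}|^2)\bigr) \leq R$; otherwise outage is the event $\tfrac12\log(1+\rho|a_{sd}|^2) \leq R$. Let $P_e(\rho)$ be the outage probability. Then this protocol achieves the diversity-multiplexing tradeoff $d(r) = (M+1)(1-2r)$ for $r \in (0, 1/2)$, where $d(r) = -\lim_{\rho\to\infty} \frac{\log P_e(\rho)}{\log\rho}$.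
   Context: Setting: one source transmits in the first half of the time slots, all relays and the destination listen; only the selected best relay transmits in the second half (orthogonal time slots, half duplex), and the destination combines both copies. The nodes do not use channel knowledge at the physical layer. Relay selection rule: among all relays, the best relay is the one with the largest value of $\min\{|a_{si}|^2,|a_{id}|^2\}$. *)

From HB Require Import structures.
From mathcomp Require Import all_boot all_order all_algebra.
From mathcomp Require Import all_classical all_reals all_analysis.
Set Implicit Arguments. Unset Strict Implicit. Unset Printing Implicit Defensive.
Import Order.TTheory GRing.Theory Num.Theory.
Local Open Scope classical_set_scope.
Local Open Scope ring_scope.

(* Links of the network with M relays:
   None             = source -> destination (a_sd)
   Some (i, false)  = source -> relay i      (a_si)
   Some (i, true)   = relay i -> destination (a_id) *)
Definition link (M : nat) : finType := option ('I_M * bool).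
Definition sd_link (M : nat) : link M := None.
Definition si_link (M : nat) (i : 'I_M) : link M := Some (i, false).
Definition id_link (M : nat) (i : 'I_M) : link M := Some (i, true).

(* A complex channel gain is given by its real part (component false)
   and imaginary part (component true). Real random components are indexed
   by  link M * bool. *)
Definition comp_index (M : nat) : finType := (link M * bool)%type.

Definition gain2 {R : realType} {T : Type} (M : nat)
  (X : comp_index M -> T -> R) (l : link M) (w : T) : R :=
  X (l, false) w ^+ 2 + X (l, true) w ^+ 2.

Definition mutually_independent {d} {T : measurableType d} {R : realType}
  (I : finType) (P : probability T R) (X : I -> T -> R) : Prop :=
  forall (J : {set I}) (B : I -> set R), (forall j, measurable (B j)) ->
    P (\bigcap_(j in [set j | j \in J]) (X j @^-1` B j)) =
    (\prod_(j in J) P (X j @^-1` B j))%E.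

(* The best relay: an index maximizing min(|a_si|^2, |a_id|^2)
   (ties broken by the library's arg max, default index i0). *)
Definition best_relay {R : realType} {T : Type} (M : nat) (i0 : 'I_M)
  (X : comp_index M -> T -> R) (w : T) : 'I_M :=
  Order.arg_max i0 xpredT
    (fun i => Num.min (gain2 X (si_link i) w) (gain2 X (id_link i) w)).

(* Outage event of opportunistic decode-and-forward at SNR rho and rate
   Rt = r log rho (logarithm base is irrelevant: same base on both sides). *)
Definition outage_event {R : realType} {T : Type} (M : nat) (i0 : 'I_M)
  (X : comp_index M -> T -> R) (r rho : R) : set T :=
  [set w | let b := best_relay i0 X w in
           let Rt := r * ln rho in
           if Rt < ln (1 + rho * gain2 X (si_link b) w) / 2 then
             ln (1 + rho * (gain2 X (sd_link M) w + gain2 X (id_link b) w)) / 2 <= Rt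
           else ln (1 + rho * gain2 X (sd_link M) w) / 2 <= Rt].

Definition outage_prob {d} {T : measurableType d} {R : realType}
  (P : probability T R) (M : nat) (i0 : 'I_M)
  (X : comp_index M -> T -> R) (r rho : R) : R :=
  fine (P (outage_event i0 X r rho)).

From mathcomp Require Import all_boot all_order all_algebra.
From mathcomp Require Import all_classical all_reals all_analysis.
From mathcomp Require Import measurable_realfun ring lra.
Set Implicit Arguments. Unset Strict Implicit. Unset Printing Implicit Defensive.
Import Order.TTheory GRing.Theory Num.Theory.
Local Open Scope classical_set_scope.
Local Open Scope ring_scope.

(* Put u = rho^(2r-1): a link of gain g is in outage, log (1 + rho g) / 2 <= r log rho,
   only if g <= u, and it is if g <= u/2 once rho^(2r) >= 2. An outage of the protocol
   therefore forces |a_sd|^2 <= u and, b being the best relay, one link of gain at most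
   u at every relay; conversely |a_sd|^2 <= u/4 and |a_id|^2 <= u/4 for all i force an
   outage. A centred normal component falls in [-a, a] with probability between two
   constant multiples of a (for a <= 1), so by independence the box "a_sd and all the
   a_id small" bounds P_e from below, and the union over the 2^M choices of one small
   link per relay bounds it from above, both by constant multiples of
   u^(M+1) = rho^((M+1)(2r-1)). *)

Lemma sqr_le_of_itv (R : realDomainType) (a x : R) : x \in `[-a, a] -> x ^+ 2 <= a ^+ 2.
Proof.
rewrite in_itv/= -ler_norml => xa.
by rewrite -real_normK ?num_real// lerXn2r// nnegrE (le_trans _ xa).
Qed.

Lemma itv_of_sqrD_le (R : realDomainType) (a x y : R) : 0 <= a ->
  x ^+ 2 + y ^+ 2 <= a ^+ 2 -> x \in `[-a, a].
Proof.
move=> a_ge0 h; rewrite in_itv/= -ler_norml -(@ler_pXn2r _ 2)// ?nnegrE//.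
by rewrite real_normK ?num_real// (le_trans _ h)// lerDl sqr_ge0.
Qed.

Section log_asymptotics.
Variable R : realType.

Lemma ln_cvgy : (@ln R) x @[x --> +oo] --> +oo.
Proof.
apply/cvgryPge => A; near=> x.
have x_gt0 : 0 < x by near: x; exact: nbhs_pinfty_gt.
have Ax : expR A <= x by near: x; exact: nbhs_pinfty_ge.
by rewrite -ler_expR lnK ?posrE.
Unshelve. all: end_near.
Qed.

(* The cast to [R^o] is needed for a bare variable [L : R] to elaborate as a limit. *)
Lemma cvg_ln_div_ln (f : R -> R) (k1 k2 L : R) : 0 < k1 -> 0 < k2 ->
  (\forall x \near +oo, k1 * x `^ L <= f x <= k2 * x `^ L) ->
  (fun x : R => ln (f x) / ln x) @ +oo --> (L : R^o).
Proof.
move=> k1_gt0 k2_gt0 f_bnd.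
have ln_gt0 : \forall x \near +oo, 0 < ln (x : R) by move/cvgryPgt : ln_cvgy; apply.
have lnV0 : (fun x => (ln x)^-1) @ +oo --> (0 : R^o).
  apply/cvgrVy; first by near=> x; rewrite invr_gt0; near: x.
  suff -> : unstable.inv_fun (fun x => (ln x)^-1) = @ln R by exact: ln_cvgy.
  by apply: funext => x /=; rewrite invrK.
have cvg_bnd k : (fun x => L + ln k / ln x) @ +oo --> (L : R^o).
  rewrite -[X in _ --> X]addr0 -(mulr0 (ln k)).
  by apply: cvgD; [exact: cvg_cst | exact: cvgMl_tmp].
apply: squeeze_cvgr (cvg_bnd k1) (cvg_bnd k2).
near=> x.
have x_gt0 : 0 < x by near: x; exact: nbhs_pinfty_gt.
have lnx_gt0 : 0 < ln x by near: x.
have /andP[lo up] : k1 * x `^ L <= f x <= k2 * x `^ L by near: x.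
have ln_bnd k : 0 < k -> ln (k * x `^ L) / ln x = L + ln k / ln x.
  move=> k_gt0; rewrite lnM ?posrE ?powR_gt0// ln_powR; field; exact: lt0r_neq0.
have fx_gt0 : 0 < f x by apply: lt_le_trans lo; rewrite mulr_gt0 ?powR_gt0.
by rewrite -!ln_bnd// !ler_pM2r ?invr_gt0// !ler_ln ?posrE ?lo ?up ?mulr_gt0 ?powR_gt0.
Unshelve. all: end_near.
Qed.

End log_asymptotics.

Section normal_sym_itv.
Variables (R : realType) (s : R).
Hypothesis s_neq0 : s != 0.

Let integral_cst_sym_itv (c a : R) : 0 < a ->
  (\int[lebesgue_measure]_(x in [set` `[-a, a]%R]) c%:E = (c *+ 2 * a)%:E)%E.
Proof.
move=> a_gt0; rewrite integral_cst//= lebesgue_measure_itv/= lte_fin gtrN//.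
by rewrite -EFinD -EFinM opprK -mulr2n mulrnAr mulrnAl.
Qed.

Lemma normal_prob_sym_itv_le (a : R) : 0 < a ->
  (normal_prob 0 s [set` `[-a, a]%R] <= (normal_peak s *+ 2 * a)%:E)%E.
Proof.
move=> a_gt0; rewrite -integral_cst_sym_itv//; apply: ge0_le_integral => //.
- by move=> x _; rewrite lee_fin normal_pdf_ge0.
- by apply/measurable_EFinP; apply: measurable_funTS; exact: measurable_normal_pdf.
- by move=> x _; rewrite lee_fin normal_pdf_ub.
Qed.

Lemma normal_prob_sym_itv_ge (a : R) : 0 < a -> a <= 1 ->
  ((normal_peak s * expR (- (s ^+ 2 *+ 2)^-1) *+ 2 * a)%:E <=
   normal_prob 0 s [set` `[-a, a]%R])%E.
Proof.
move=> a_gt0 a_le1; rewrite -integral_cst_sym_itv//; apply: ge0_le_integral => //.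
- move=> x _; rewrite lee_fin mulr_ge0 ?expR_ge0//; exact: normal_peak_ge0.
- by apply/measurable_EFinP; apply: measurable_funTS; exact: measurable_normal_pdf.
move=> x /=; rewrite in_itv/= -ler_norml => xa.
rewrite lee_fin normal_pdfE// ler_pM2l ?normal_peak_gt0// /normal_fun ler_expR subr0.
rewrite !mulNr lerN2 -[leRHS]mul1r ler_pM2r ?invr_gt0 ?mulrn_wgt0 ?exprn_even_gt0//.
by rewrite -real_normK ?num_real// expr_le1// (le_trans xa).
Qed.

End normal_sym_itv.

Lemma gain2_ge0 (R : realType) (T : Type) (M : nat) (X : comp_index M -> T -> R)
  (l : link M) (w : T) : 0 <= gain2 X l w.
Proof. by rewrite addr_ge0 ?sqr_ge0. Qed.

Section outage_thresholds.
Variables (R : realType) (T : Type) (M : nat) (i0 : 'I_M).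
Variables (X : comp_index M -> T -> R) (r rho : R).
Hypotheses (r_gt0 : 0 < r) (rho_gt0 : 0 < rho).
Let u := rho `^ (2 * r - 1).

Let mulr_rate : rho * u = rho `^ (2 * r).
Proof. by rewrite mulr_powRB1 ?ltW ?mulr_gt0. Qed.

Lemma half_ln_le_rateE (g : R) : 0 <= g ->
  (ln (1 + rho * g) / 2 <= r * ln rho) = (1 + rho * g <= rho `^ (2 * r)).
Proof.
move=> g_ge0; have snr_gt0 : 0 < 1 + rho * g by have := mulr_ge0 (ltW rho_gt0) g_ge0; lra.
rewrite ler_pdivrMr// (_ : r * ln rho * 2 = ln (rho `^ (2 * r))).
  by rewrite ler_ln ?posrE ?powR_gt0.
by rewrite ln_powR mulrC mulrA.
Qed.

Lemma gain_le_of_outage (g : R) : 0 <= g -> ln (1 + rho * g) / 2 <= r * ln rho -> g <= u.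
Proof.
move=> g_ge0; rewrite half_ln_le_rateE// -mulr_rate => h.
by rewrite -(ler_pM2l rho_gt0); apply: le_trans h; rewrite lerDr.
Qed.

Lemma outage_of_gain_le (g : R) : 2 <= rho `^ (2 * r) -> 0 <= g -> g <= u / 2 ->
  ln (1 + rho * g) / 2 <= r * ln rho.
Proof.
rewrite -mulr_rate => snr_ge2 g_ge0 g_le; rewrite half_ln_le_rateE// -mulr_rate.
have : rho * g <= rho * (u / 2) by rewrite ler_pM2l.
lra.
Qed.

Lemma outage_event_sub_weak_links : outage_event i0 X r rho `<=`
  [set w | gain2 X (sd_link M) w <= u /\
           forall i, Num.min (gain2 X (si_link i) w) (gain2 X (id_link i) w) <= u].
Proof.
move=> w; rewrite /outage_event/=; set b := best_relay i0 X w => out.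
have b_max i : Num.min (gain2 X (si_link i) w) (gain2 X (id_link i) w) <=
               Num.min (gain2 X (si_link b) w) (gain2 X (id_link b) w).
  by rewrite /b /best_relay; case: arg_maxP => // j _; apply.
suff [sd_le b_le] : gain2 X (sd_link M) w <= u /\
    Num.min (gain2 X (si_link b) w) (gain2 X (id_link b) w) <= u.
  by split=> // i; apply: le_trans (b_max i) b_le.
have g_ge0 := gain2_ge0 X ^~ w.
move: out; case: ifP => [_|]; last first.
  move/negbT; rewrite -leNgt => /gain_le_of_outage si_le /gain_le_of_outage sd_le.
  by rewrite ge_min si_le ?sd_le.
move/gain_le_of_outage => /(_ (addr_ge0 (g_ge0 _) (g_ge0 _))) sum_le.
have := g_ge0 (sd_link M); have := g_ge0 (id_link b).
by rewrite ge_min; split; [|apply/orP; right]; lra.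
Qed.

Lemma weak_direct_links_sub_outage_event : 2 <= rho `^ (2 * r) ->
  [set w | gain2 X (sd_link M) w <= u / 4 /\ forall i, gain2 X (id_link i) w <= u / 4]
  `<=` outage_event i0 X r rho.
Proof.
move=> snr_ge2 w [sd_le id_le]; rewrite /outage_event/=.
have g_ge0 := gain2_ge0 X ^~ w.
have u_ge0 : 0 <= u by exact: powR_ge0.
set b := best_relay i0 X w.
have := id_le b; have := g_ge0 (id_link b); have := g_ge0 (sd_link M).
by case: ifP => _ *; apply: outage_of_gain_le => //; lra.
Qed.

End outage_thresholds.

Section finite_choice_measurability.
Variables (d : measure_display) (T : measurableType d).

Lemma measurable_fun_forall (I : finType) (B : I -> T -> bool) :
  (forall i, measurable_fun setT (B i)) ->
  measurable_fun setT (fun w => [forall i, B i w]).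
Proof.
move=> mB; apply: (measurable_fun_bool true).
rewrite setTI (_ : _ @^-1` _ = \bigcap_(i in setT) (B i @^-1` [set true])).
  apply: fin_bigcap_measurable => // i _.
  by rewrite -[X in measurable X]setTI; exact: mB.
by apply/seteqP; split=> w /= => [/forallP h i _ | h]; [exact: h | apply/forallP => i; exact: h].
Qed.

Lemma measurable_fun_odflt_pick_eq (I : finType) (Q : I -> T -> bool) (i0 k : I) :
  (forall i, measurable_fun setT (Q i)) ->
  measurable_fun setT (fun w => odflt i0 [pick i | Q i w] == k).
Proof.
move=> mQ; rewrite /pick /enum_mem; elim: (Finite.enum I) => [|y s IH] /=.
  exact: measurable_cst.
have := measurable_fun_ifT (mQ y) (measurable_cst (y == k)) IH.
by congr measurable_fun; apply: funext => w /=; rewrite -[Q y w]/(y \in Q^~ w); case: ifP.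
Qed.

Lemma measurable_fun_arg_max_eq (R : realType) (I : finType) (F : I -> T -> R) (i0 k : I) :
  (forall i, measurable_fun setT (F i)) ->
  measurable_fun setT (fun w => Order.arg_max i0 xpredT (F ^~ w) == k).
Proof.
move=> mF; apply: (measurable_fun_odflt_pick_eq (Q := fun i w => [forall j, F j w <= F i w])).
by move=> i; apply: measurable_fun_forall => j; exact: measurable_fun_ler.
Qed.

Lemma measurable_fun_select (I : finType) (g : T -> I) (h : I -> T -> bool) :
  (forall k, measurable_fun setT (fun w => g w == k)) ->
  (forall k, measurable_fun setT (h k)) ->
  measurable_fun setT (fun w => h (g w) w).
Proof.
move=> mg mh.
rewrite (_ : (fun w => _) = fun w => [forall k, ~~ (g w == k) || h k w]).
  by apply: measurable_fun_forall => k; apply: measurable_or => //; exact: measurable_neg.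
apply: funext => w; apply/idP/forallP => [hw k | /(_ (g w))]; last by rewrite eqxx.
by case: eqP => // <-.
Qed.

End finite_choice_measurability.

Lemma content_fin_subadditive (d : measure_display) (T : measurableType d)
    (R : realType) (mu : {content set T -> \bar R}) (I : finType) (A : set T) (F : I -> set T) :
  measurable A -> (forall i, measurable (F i)) -> A `<=` \bigcup_i F i ->
  (mu A <= \sum_i mu (F i))%E.
Proof.
move=> mA mF AF; have [i0 _|I0] := pickP (fun _ : I => true); last first.
  have -> : A = set0 by apply/seteqP; split=> // w /AF [i]; have := I0 i.
  by rewrite measure0 big_pred0.
pose s := [seq F i | i <- enum I].
have nth_s k : (k < size s)%N -> nth set0 s k = F (nth i0 (enum I) k).
  by move=> ks; rewrite (nth_map i0) -?(size_map F).
rewrite -big_enum /= -(big_map F xpredT (fun S => mu S)) (big_nth set0) big_mkord.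
apply: content_subadditive => //.
  by move=> k /= ks; rewrite nth_s.
move=> w /AF [i _ Fiw]; rewrite -bigcup_mkord; exists (index i (enum I)).
  by rewrite /= size_map index_mem mem_enum.
by rewrite nth_s ?nth_index ?mem_enum// size_map index_mem mem_enum.
Qed.

Lemma iid_prob_bigcap_preimage (d : measure_display) (T : measurableType d) (R : realType)
    (P : probability T R) (I : finType) (X : I -> T -> R) (B : set R) (p : R)
    (J : {set I}) :
  mutually_independent P X -> measurable B -> (forall j, P (X j @^-1` B) = p%:E) ->
  P (\bigcap_(j in [set j | j \in J]) X j @^-1` B) = (p ^+ #|J|)%:E.
Proof.
move=> indep mB XB; rewrite (indep J (fun=> B))//.
by under eq_bigr do rewrite XB; rewrite prodEFin prodr_const.
Qed.

(* The components of a_sd and, for each relay i, of its destination link if [f i]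
   and of its source link otherwise. *)
Definition selected_comps (M : nat) (f : {ffun 'I_M -> bool}) : {set comp_index M} :=
  [set (omap (fun i => (i, f i)) x.1, x.2) | x : option 'I_M * bool].

Lemma card_selected_comps (M : nat) (f : {ffun 'I_M -> bool}) :
  #|selected_comps f| = (M.+1 * 2)%N.
Proof.
rewrite card_imset ?cardsT ?card_prod ?card_option ?card_ord ?card_bool//.
by move=> [[i|] c] [[j|] c'] //= [] // => [-> _ ->|->].
Qed.

Lemma mem_selected_comps (M : nat) (f : {ffun 'I_M -> bool}) (l : link M) (c : bool) :
  ((l, c) \in selected_comps f) = if l is Some (i, b) then b == f i else true.
Proof.
apply/imsetP/idP => [[[[i|] c'] _ [-> _]] //= | ].
case: l => [[i b]|] /=; last by exists (None, c).
by move/eqP ->; exists (Some i, c).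
Qed.

Section opportunistic_df.
Variables (R : realType) (d : measure_display) (T : measurableType d).
Variables (P : probability T R) (M : nat) (X : comp_index M -> T -> R) (s : R).
Hypotheses (s_neq0 : s != 0) (X_meas : forall j, measurable_fun setT (X j)).
Hypothesis X_normal : forall j (B : set R), measurable B ->
  P (X j @^-1` B) = normal_prob 0 s B.
Hypothesis X_indep : mutually_independent P X.

Lemma measurable_outage_event (i0 : 'I_M) (r rho : R) :
  measurable (outage_event i0 X r rho).
Proof.
have mgain l : measurable_fun setT (gain2 X l).
  by apply: measurable_funD; apply: measurable_funX.
have mrate (g : T -> R) : measurable_fun setT g ->
    measurable_fun setT (fun w => ln (1 + rho * g w) / 2).
  move=> mg; apply: measurable_funM => //; apply: measurableT_comp => //.
  by apply: measurable_funD => //; exact: measurable_funM.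
pose outage_at (b : 'I_M) w :=
  if r * ln rho < ln (1 + rho * gain2 X (si_link b) w) / 2
  then ln (1 + rho * (gain2 X (sd_link M) w + gain2 X (id_link b) w)) / 2 <= r * ln rho
  else ln (1 + rho * gain2 X (sd_link M) w) / 2 <= r * ln rho.
have : measurable_fun setT (fun w => outage_at (best_relay i0 X w) w).
  apply: measurable_fun_select => b.
    by apply: measurable_fun_arg_max_eq => i; apply: measurable_minr.
  apply: measurable_fun_ifT.
  - by apply: measurable_fun_ltr; [exact: measurable_cst | exact: mrate].
  - by apply: measurable_fun_ler; [apply: mrate; exact: measurable_funD | exact: measurable_cst].
  - by apply: measurable_fun_ler; [exact: mrate | exact: measurable_cst].
by move/(_ measurableT [set true]); rewrite setTI; apply.
Qed.

Let q (a : R) := fine (normal_prob 0 s [set` `[-a, a]%R]).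
Let c_lo := normal_peak s * expR (- (s ^+ 2 *+ 2)^-1) *+ 2.
Let c_hi := normal_peak s *+ 2.

Let c_lo_gt0 : 0 < c_lo.
Proof. by rewrite mulrn_wgt0// mulr_gt0 ?expR_gt0 ?normal_peak_gt0. Qed.

Let c_hi_gt0 : 0 < c_hi.
Proof. by rewrite mulrn_wgt0 ?normal_peak_gt0. Qed.

Let normal_prob_itvE (a : R) : normal_prob 0 s [set` `[-a, a]%R] = (q a)%:E.
Proof. by rewrite fineK// fin_num_measure. Qed.

Let q_pow_ge (a : R) : 0 < a -> a <= 1 ->
  (c_lo ^+ 2 * a ^+ 2) ^+ M.+1 <= q a ^+ (M.+1 * 2).
Proof.
move=> a_gt0 a_le1; have := normal_prob_sym_itv_ge s_neq0 a_gt0 a_le1.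
rewrite normal_prob_itvE lee_fin => q_ge.
have ca_ge0 : 0 <= c_lo * a by rewrite mulr_ge0 ?ltW.
rewrite -exprMn mulnC exprM; apply: lerXn2r; rewrite ?nnegrE ?exprn_ge0 ?(le_trans ca_ge0)//.
by apply: lerXn2r; rewrite ?nnegrE ?(le_trans ca_ge0).
Qed.

Let q_pow_le (a : R) : 0 < a -> q a ^+ (M.+1 * 2) <= (c_hi ^+ 2 * a ^+ 2) ^+ M.+1.
Proof.
move=> a_gt0; have := normal_prob_sym_itv_le s_neq0 a_gt0.
rewrite normal_prob_itvE lee_fin => q_le.
have q_ge0 : 0 <= q a by rewrite fine_ge0 ?measure_ge0.
have ca_ge0 : 0 <= c_hi * a by rewrite mulr_ge0 ?ltW.
rewrite -exprMn mulnC exprM; apply: lerXn2r; rewrite ?nnegrE ?exprn_ge0//.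
by apply: lerXn2r.
Qed.

Let box (f : {ffun 'I_M -> bool}) (a : R) : set T :=
  \bigcap_(j in [set j | j \in selected_comps f]) X j @^-1` [set` `[-a, a]%R].

Let measurable_box f a : measurable (box f a).
Proof.
apply: fin_bigcap_measurable => // j _.
by rewrite -[X in measurable X]setTI; exact: X_meas.
Qed.

Let prob_box f a : P (box f a) = (q a ^+ (M.+1 * 2))%:E.
Proof.
rewrite -(card_selected_comps f); apply: iid_prob_bigcap_preimage => // j.
by rewrite X_normal// normal_prob_itvE.
Qed.

Let outage_probE (i0 : 'I_M) (r rho : R) :
  (outage_prob P i0 X r rho)%:E = P (outage_event i0 X r rho).
Proof. by rewrite fineK// fin_num_measure//; exact: measurable_outage_event. Qed.

Lemma outage_prob_ge (i0 : 'I_M) (r rho : R) :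
  0 < r -> r <= 2^-1 -> 1 <= rho -> 2 <= rho `^ (2 * r) ->
  (c_lo ^+ 2 / 8 * rho `^ (2 * r - 1)) ^+ M.+1 <= outage_prob P i0 X r rho.
Proof.
move=> r_gt0 r_le rho_ge1 snr_ge2; set u := rho `^ (2 * r - 1).
have rho_gt0 : 0 < rho by apply: lt_le_trans rho_ge1.
have u_gt0 : 0 < u by exact: powR_gt0.
have u_le1 : u <= 1 by rewrite -(powRr0 rho) ler_powR//; lra.
pose a := Num.sqrt (u / 8).
have a_gt0 : 0 < a by rewrite sqrtr_gt0 divr_gt0.
have a_le1 : a <= 1 by rewrite -sqrtr1 ler_sqrt//; lra.
have a2 : a ^+ 2 = u / 8 by rewrite sqr_sqrtr// divr_ge0 ?ltW.
have box_sub : box [ffun=> true] a `<=` outage_event i0 X r rho.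
  apply: subset_trans (weak_direct_links_sub_outage_event i0 r_gt0 rho_gt0 snr_ge2).
  move=> w box_w.
  have weak l : (forall c, (l, c) \in selected_comps [ffun=> true]) ->
      gain2 X l w <= u / 4.
    move=> lS; have := sqr_le_of_itv (box_w _ (lS false)).
    by have := sqr_le_of_itv (box_w _ (lS true)); rewrite a2 /gain2; lra.
  by split=> [|i]; apply: weak => c; rewrite /sd_link /id_link mem_selected_comps ?ffunE.
rewrite -lee_fin outage_probE; apply: (@le_trans _ _ (P (box [ffun=> true] a))).
  rewrite prob_box lee_fin; apply: le_trans (q_pow_ge a_gt0 a_le1).
  by rewrite a2 mulrAC mulrA.
by apply: (@le_measure _ _ _ P); rewrite ?inE//; exact: measurable_outage_event.
Qed.

Lemma outage_prob_le (i0 : 'I_M) (r rho : R) : 0 < r -> 0 < rho ->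
  outage_prob P i0 X r rho <= 2 ^+ M * (c_hi ^+ 2 * rho `^ (2 * r - 1)) ^+ M.+1.
Proof.
move=> r_gt0 rho_gt0; set u := rho `^ (2 * r - 1).
have u_ge0 : 0 <= u by exact: powR_ge0.
pose a := Num.sqrt u.
have a_gt0 : 0 < a by rewrite sqrtr_gt0 powR_gt0.
have a2 : a ^+ 2 = u by rewrite sqr_sqrtr.
have cover : outage_event i0 X r rho `<=` \bigcup_f box f a.
  move=> w /(outage_event_sub_weak_links r_gt0 rho_gt0 (t := w)) [sd_le min_le].
  have weak l c : gain2 X l w <= u -> X (l, c) w \in `[-a, a].
    rewrite -a2 /gain2 => h.
    apply: (itv_of_sqrD_le (y := X (l, ~~ c) w)); first exact: ltW.
    by case: c h; rewrite // addrC.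
  (* The weak link of relay i: its source link if that one is weak, else its
     destination link. *)
  exists [ffun i => ~~ (gain2 X (si_link i) w <= u)] => // -[l c].
  rewrite /= mem_selected_comps; case: l => [[i b]|] /=; last by move=> _; exact: weak.
  rewrite ffunE => /eqP ->; apply: weak.
  case: (boolP (gain2 X (si_link i) w <= u)) => [// | si_gt].
  by move: (min_le i); rewrite -/u ge_min (negbTE si_gt).
rewrite -lee_fin outage_probE.
apply: le_trans (content_fin_subadditive _ (measurable_outage_event _ _ _) _ cover) _ => //.
rewrite (eq_bigr (fun=> (q a ^+ (M.+1 * 2))%:E)) => [|f _]; last exact: prob_box.
rewrite sumEFin lee_fin sumr_const card_ffun card_bool card_ord -[leLHS]mulr_natl natrX.
by rewrite ler_wpM2l ?exprn_ge0// -a2 q_pow_le.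
Qed.

Lemma outage_prob_sandwich (i0 : 'I_M) (r : R) : 0 < r -> r < 2^-1 ->
  exists k1 k2 : R, [/\ 0 < k1, 0 < k2 &
    \forall rho \near +oo, k1 * rho `^ ((2 * r - 1) * M.+1%:R) <= outage_prob P i0 X r rho
                           <= k2 * rho `^ ((2 * r - 1) * M.+1%:R)].
Proof.
move=> r_gt0 r_lt; exists ((c_lo ^+ 2 / 8) ^+ M.+1), (2 ^+ M * (c_hi ^+ 2) ^+ M.+1).
have [lo_gt0 hi_gt0] := (c_lo_gt0, c_hi_gt0).
split; [by rewrite !exprn_gt0// divr_gt0// exprn_gt0 | by rewrite mulr_gt0// !exprn_gt0 |].
near=> rho.
have rho_ge1 : 1 <= rho by near: rho; exact: nbhs_pinfty_ge.
have snr_ge2 : 2 <= rho `^ (2 * r).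
  have r2_gt0 : 0 < 2 * r by rewrite mulr_gt0.
  apply: (@le_trans _ _ ((2 `^ (2 * r)^-1) `^ (2 * r))).
    by rewrite -powRrM mulVf ?gt_eqF ?powRr1.
  apply: ge0_ler_powR; [exact: ltW | by rewrite nnegrE powR_ge0 | |].
    by rewrite nnegrE (le_trans ler01).
  near: rho; exact: nbhs_pinfty_ge.
rewrite powRrM powR_mulrn ?powR_ge0//; apply/andP; split.
  by rewrite -exprMn; apply: outage_prob_ge => //; exact: ltW.
by rewrite -mulrA -exprMn; apply: outage_prob_le => //; exact: lt_le_trans rho_ge1.
Unshelve. all: end_near.
Qed.

End opportunistic_df.

Theorem theorem3 (R : realType) (d : measure_display) (T : measurableType d)
  (P : probability T R) (M : nat) (hM : (0 < M)%N)
  (X : comp_index M -> T -> R)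
  (hXmeas : forall j, measurable_fun setT (X j))
  (hXnormal : forall j (B : set R), measurable B ->
     P (X j @^-1` B) = normal_prob 0 (Num.sqrt (2^-1)) B)
  (hXindep : mutually_independent P X)
  (r : R) (hr0 : 0 < r) (hr1 : r < 2^-1) :
  (fun rho : R => ln (outage_prob P (Ordinal hM) X r rho) / ln rho)
    @ +oo --> - ((M.+1)%:R * (1 - 2 * r)).
Proof.
have s_neq0 : Num.sqrt 2^-1 != 0 :> R by rewrite gt_eqF// sqrtr_gt0 invr_gt0.
have [k1 [k2 [k1_gt0 k2_gt0 P_e_bnd]]] :=
  outage_prob_sandwich s_neq0 hXmeas hXnormal hXindep (Ordinal hM) hr0 hr1.
rewrite (_ : - (M.+1%:R * (1 - 2 * r)) = (2 * r - 1) * M.+1%:R); last by ring.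
exact: cvg_ln_div_ln k1_gt0 k2_gt0 P_e_bnd.
Qed.
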